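(* Let $R$ be a commutative ring, $\mathfrak a\subseteq I$ finitely generated ideals of $R$, and $f_0\in\mathfrak a$ an $R$-regular element. Then, as ideals of $R/(f_0)$, $$\operatorname{Kitt}(\mathfrak a,I)/(f_0)=\operatorname{Kitt}(\mathfrak a/(f_0),\,I/(f_0)).$$
   Context: For a commutative ring $A$, ideals $I=(f_1,\dots,f_r)\supseteq\mathfrak a=(a_1,\dots,a_s)$ and a matrix $(c_{ij})$ with $a_j=\sum_i c_{ij}f_i$: let $K_\bullet(\mathbf f;A)$ be the Koszul DG algebra (exterior algebra on $e_1,\dots,e_r$, $\partial e_i=f_i$), $\zeta_j=\sum_i c_{ij}e_i$, $\Gamma_\bullet$ the subalgebra generated by the $\zeta_j$, $Z_\bullet$ the subalgebra of Koszul cycles. $\operatorname{Kitt}(\mathfrak a,I)$ is the degree-$r$ component of the subalgebra generated by $\Gamma_\bullet$ and $Z_\bullet$ (the span of $\gamma\wedge z$, $\gamma\in\Gamma_j$, $z\in Z_{r-j}$), identified with an ideal of $A$ via $K_r=Ae_1\wedge\cdots\wedge e_r\cong A$; it does not depend on the choices of generators and matrix. *)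

From HB Require Import structures.
From mathcomp Require Import all_boot all_order all_algebra.
From mathcomp Require Import generic_quotient ring_quotient.
From mathcomp Require Import boolp.
Set Implicit Arguments. Unset Strict Implicit. Unset Printing Implicit Defensive.
Import Order.TTheory GRing.Theory Num.Theory.
Local Open Scope ring_scope.
Local Open Scope quotient_scope.

(* The Koszul DG algebra K(f; A) on r generators e_0, ..., e_(r-1).          *)
(* An element is a family of coefficients indexed by subsets S of 'I_r,      *)
(* the coefficient of e_S = e_(s1) /\ ... /\ e_(sk), s1 < ... < sk.           *)
Notation koszul A r := {ffun {set 'I_r} -> A} (only parsing).

Section Koszul.
Variables (A : comPzRingType) (r : nat).

Definition kbasis (S : {set 'I_r}) : koszul A r := [ffun U : {set 'I_r} => (U == S)%:R].

Definition kscale (x : A) (u : koszul A r) : koszul A r :=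
  [ffun S : {set 'I_r} => x * u S].

Definition kone : koszul A r := kbasis set0.
Definition ktop : koszul A r := kbasis setT.

(* sign of e_S /\ e_T = sign * e_(S :|: T) for disjoint S, T *)
Definition wsign (S T : {set 'I_r}) : A :=
  (-1) ^+ #|[set p : 'I_r * 'I_r | (p.1 \in S) && (p.2 \in T) && (p.2 < p.1)%N]|.

Definition wedge (u v : koszul A r) : koszul A r :=
  [ffun U : {set 'I_r} => \sum_(S : {set 'I_r}) \sum_(T : {set 'I_r} |
      [disjoint S & T] && (S :|: T == U)) wsign S T * u S * v T].

(* Koszul differential: d e_i = f_i, extended as a graded derivation:
   d e_S = sum_(i in S) (-1)^(#{j in S | j < i}) f_i e_(S :\ i). *)
Definition kdiff (f : 'I_r -> A) (u : koszul A r) : koszul A r :=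
  [ffun U : {set 'I_r} => \sum_(i : 'I_r | i \notin U)
      (-1) ^+ #|[set j in U | (j < i)%N]| * f i * u (i |: U)].

Definition khomog (k : nat) (u : koszul A r) : Prop :=
  forall S : {set 'I_r}, #|S| != k -> u S = 0.

Definition kcycle (f : 'I_r -> A) (k : nat) (z : koszul A r) : Prop :=
  khomog k z /\ kdiff f z = 0.

End Koszul.

Section Kitt.
Variables (A : comPzRingType) (r s : nat).

Definition kzeta (c : 'M[A]_(r, s)) (j : 'I_s) : koszul A r :=
  \sum_(i < r) kscale (c i j) (kbasis A [set i]).

(* Gamma_k : degree-k part of the subalgebra Gamma generated by the zeta_j,
   i.e. A-linear combinations of products of k of the zeta_j. *)
Definition kgamma (c : 'M[A]_(r, s)) (k : nat) (g : koszul A r) : Prop :=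
  exists (m : nat) (coef : 'I_m -> A) (idx : 'I_m -> k.-tuple 'I_s),
    g = \sum_(l < m) kscale (coef l) (\big[@wedge A r / kone A r]_(t <- idx l) kzeta c t).

(* Kitt(a, I), computed from generators f of I and a matrix c with
   a_j = sum_i c_ij f_i: the set of x in A such that x e_1/\.../\e_r lies in
   the span of the gamma /\ z, gamma in Gamma_k, z in Z_(r-k). *)
Definition kitt (f : 'I_r -> A) (c : 'M[A]_(r, s)) (x : A) : Prop :=
  exists (n : nat) (d : 'I_n -> nat) (g z : 'I_n -> koszul A r),
    [/\ forall l, kgamma c (d l) (g l),
        forall l, kcycle f (r - d l) (z l) &
        kscale x (ktop A r) = \sum_(l < n) wedge (g l) (z l)].

End Kitt.

Section PrincipalQuotient.
Variables (A : comPzRingType) (f0 : A).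

Definition pideal : {pred A} := fun x => `[< exists t : A, x = t * f0 >].

Lemma pideal_zmod_closed : zmod_closed pideal.
Proof.
split.
  by apply/asboolP; exists 0; rewrite mul0r.
move=> x y /asboolP [t ->] /asboolP [u ->]; apply/asboolP.
by exists (t - u); rewrite mulrBl.
Qed.

HB.instance Definition _ := GRing.isZmodClosed.Build A pideal pideal_zmod_closed.

Lemma pidealMl x y : y \in pideal -> x * y \in pideal.
Proof.
by move=> /asboolP [t ->]; apply/asboolP; exists (x * t); rewrite mulrA.
Qed.

Definition pquot := Quotient.quot pideal.
HB.instance Definition _ := Choice.on pquot.
HB.instance Definition _ := GRing.Zmodule.on pquot.
HB.instance Definition _ : EqQuotient A (Quotient.equiv pideal) pquot :=
  EqQuotient.on pquot.

Definition pq_one : pquot := lift_cst pquot 1.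
Definition pq_mul := lift_op2 pquot *%R.
Canonical pq_one_morph := PiConst pq_one.

Lemma pq_pi_mul : {morph \pi_pquot : x y / x * y >-> pq_mul x y}.
Proof.
move=> x y; unlock pq_mul; apply/eqP; rewrite piE Quotient.equivE.
rewrite -[_ * _](addrNK (x * repr (\pi_pquot y))) -mulrBr.
rewrite -addrA -mulrBl rpredD //.
  by apply: pidealMl; rewrite Quotient.idealrDE opprK reprK.
by rewrite mulrC; apply: pidealMl; rewrite Quotient.idealrDE opprK reprK.
Qed.
Canonical pq_mul_morph := PiMorph2 pq_pi_mul.

Lemma pq_mulA : associative pq_mul.
Proof. by move=> x y z; rewrite -[x]reprK -[y]reprK -[z]reprK !piE mulrA. Qed.
Lemma pq_mulC : commutative pq_mul.
Proof. by move=> x y; rewrite -[x]reprK -[y]reprK !piE mulrC. Qed.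
Lemma pq_mul1 : left_id pq_one pq_mul.
Proof. by move=> x; rewrite -[x]reprK !piE mul1r. Qed.
Lemma pq_mulDl : left_distributive pq_mul +%R.
Proof.
move=> x y z; rewrite -[x]reprK -[y]reprK -[z]reprK.
by rewrite !piE mulrDl.
Qed.

HB.instance Definition _ := GRing.Zmodule_isComPzRing.Build pquot
  pq_mulA pq_mulC pq_mul1 pq_mulDl.

Definition pqpi (x : A) : pquot := \pi_pquot x.

End PrincipalQuotient.

(* Reduction modulo f0 maps Gamma, the Koszul cycles and wedge products over R
   to those over R/(f0), which gives one inclusion.  Conversely, lift
   gamma in Gamma_j and a cycle z of degree k over R/(f0) to gamma in Gamma_j
   and a homogeneous z over R.  Then dz = f0 w, and since f0 is regular and
   d^2 = 0, w is a cycle of degree k - 1.  Writing f0 = sum_j u_j a_j, the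
   element zeta = sum_j u_j zeta_j of Gamma_1 has d zeta = f0, so
   d (zeta /\ w) = f0 w and z - zeta /\ w is a cycle lifting the given one.
   Hence gamma /\ z = gamma /\ (z - zeta /\ w) + (gamma /\ zeta) /\ w lies in
   the span defining Kitt(a, I); summing such lifts yields an element of top
   degree, i.e. x e_1 /\ ... /\ e_r, reducing to the given element of
   Kitt(a/(f0), I/(f0)). *)

From HB Require Import structures.
From mathcomp Require Import all_boot all_order all_algebra.
From mathcomp Require Import generic_quotient ring_quotient boolp.
From mathcomp Require Import ring.
Set Implicit Arguments. Unset Strict Implicit. Unset Printing Implicit Defensive.
Import GRing.Theory.
Local Open Scope ring_scope.

Section KoszulAlgebra.
Variables (A : comPzRingType) (r : nat).
Local Notation K := {ffun {set 'I_r} -> A}.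
Implicit Types (u v w : K) (S T U V X Y : {set 'I_r}).

Lemma kscaleE x u S : kscale x u S = x * u S.
Proof. by rewrite ffunE. Qed.

Lemma kscaleA x y u : kscale x (kscale y u) = kscale (x * y) u.
Proof. by apply/ffunP => S; rewrite !ffunE mulrA. Qed.

Lemma kscaleBr x u v : kscale x (u - v) = kscale x u - kscale x v.
Proof. by apply/ffunP => S; rewrite !ffunE mulrBr. Qed.

Lemma kscale_suml I (s : seq I) (F : I -> A) u :
  kscale (\sum_(i <- s) F i) u = \sum_(i <- s) kscale (F i) u.
Proof.
apply/ffunP => S; rewrite ffunE sum_ffunE mulr_suml.
by apply: eq_bigr => i _; rewrite ffunE.
Qed.

Lemma kscale_sumr I (s : seq I) (F : I -> K) x :
  kscale x (\sum_(i <- s) F i) = \sum_(i <- s) kscale x (F i).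
Proof.
apply/ffunP => S; rewrite ffunE !sum_ffunE mulr_sumr.
by apply: eq_bigr => i _; rewrite ffunE.
Qed.

Lemma wedgeE u v U : wedge u v U = \sum_(S : {set 'I_r}) \sum_(T : {set 'I_r})
  (if [disjoint S & T] && (S :|: T == U) then wsign A S T * u S * v T else 0).
Proof. by rewrite ffunE; apply: eq_bigr => S _; rewrite big_mkcond. Qed.

Lemma wedgeDl u1 u2 v : wedge (u1 + u2) v = wedge u1 v + wedge u2 v.
Proof.
apply/ffunP => U; rewrite !ffunE -big_split; apply: eq_bigr => S _.
by rewrite -big_split; apply: eq_bigr => T _; rewrite ffunE mulrDr mulrDl.
Qed.

Lemma wedgeDr u v1 v2 : wedge u (v1 + v2) = wedge u v1 + wedge u v2.
Proof.
apply/ffunP => U; rewrite !ffunE -big_split; apply: eq_bigr => S _.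
by rewrite -big_split; apply: eq_bigr => T _; rewrite ffunE mulrDr.
Qed.

Lemma wedgeZl x u v : wedge (kscale x u) v = kscale x (wedge u v).
Proof.
apply/ffunP => U; rewrite !ffunE mulr_sumr; apply: eq_bigr => S _.
by rewrite mulr_sumr; apply: eq_bigr => T _; rewrite ffunE; ring.
Qed.

Lemma wedgeZr x u v : wedge u (kscale x v) = kscale x (wedge u v).
Proof.
apply/ffunP => U; rewrite !ffunE mulr_sumr; apply: eq_bigr => S _.
by rewrite mulr_sumr; apply: eq_bigr => T _; rewrite ffunE; ring.
Qed.

Lemma wedge0l v : wedge 0 v = 0.
Proof.
apply/ffunP => U; rewrite !ffunE big1 // => S _.
by rewrite big1 // => T _; rewrite ffunE mulr0 mul0r.
Qed.

Lemma wedge0r u : wedge u 0 = 0.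
Proof.
apply/ffunP => U; rewrite !ffunE big1 // => S _.
by rewrite big1 // => T _; rewrite ffunE mulr0.
Qed.

Lemma wedge_suml I (s : seq I) (F : I -> K) v :
  wedge (\sum_(i <- s) F i) v = \sum_(i <- s) wedge (F i) v.
Proof.
by apply: (big_morph (fun u => wedge u v)) => [u1 u2|]; rewrite ?wedgeDl ?wedge0l.
Qed.

Lemma wedge_sumr I (s : seq I) (F : I -> K) u :
  wedge u (\sum_(i <- s) F i) = \sum_(i <- s) wedge u (F i).
Proof.
by apply: (big_morph (wedge u)) => [v1 v2|]; rewrite ?wedgeDr ?wedge0r.
Qed.

Definition inversions S T : {set 'I_r * 'I_r} :=
  [set p | (p.1 \in S) && (p.2 \in T) && (p.2 < p.1)%N].

Lemma wsignE S T : wsign A S T = (-1) ^+ #|inversions S T|.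
Proof. by []. Qed.

Lemma inversionsUl S T V : [disjoint S & T] ->
  #|inversions (S :|: T) V| = (#|inversions S V| + #|inversions T V|)%N.
Proof.
move=> dST; rewrite -cardsUI.
have -> : inversions S V :&: inversions T V = set0.
  apply/setP => p; rewrite !inE.
  by case pS: (p.1 \in S); rewrite //= (disjointFr dST pS) andbF.
rewrite cards0 addn0; apply: eq_card => p.
by rewrite !inE -!andbA andb_orl.
Qed.

Lemma inversionsUr S T V : [disjoint T & V] ->
  #|inversions S (T :|: V)| = (#|inversions S T| + #|inversions S V|)%N.
Proof.
move=> dTV; rewrite -cardsUI.
have -> : inversions S T :&: inversions S V = set0.
  apply/setP => p; rewrite !inE.
  by case pT: (p.2 \in T); rewrite /= ?andbF // (disjointFr dTV pT) !andbF.
rewrite cards0 addn0; apply: eq_card => p.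
by rewrite !inE -!andbA andb_orl andb_orr.
Qed.

Lemma wsign_cocycle S T V : [disjoint S & T] -> [disjoint T & V] ->
  wsign A S T * wsign A (S :|: T) V = wsign A S (T :|: V) * wsign A T V.
Proof.
by move=> dST dTV; rewrite !wsignE inversionsUl // inversionsUr // !exprD mulrA.
Qed.

Lemma wsign0l T : wsign A set0 T = 1.
Proof.
rewrite wsignE (_ : inversions _ _ = set0) ?cards0 //.
by apply/setP => p; rewrite !inE.
Qed.

Lemma wsign0r S : wsign A S set0 = 1.
Proof.
rewrite wsignE (_ : inversions _ _ = set0) ?cards0 //.
by apply/setP => p; rewrite !inE andbF.
Qed.

Definition ksign T (i : 'I_r) : A := (-1) ^+ #|[set j in T | (j < i)%N]|.

Lemma wsign1l i T : wsign A [set i] T = ksign T i.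
Proof.
rewrite wsignE /ksign; congr (_ ^+ _).
rewrite -[RHS](card_imset _ (fun a b (e : (i, a) = (i, b)) => congr1 snd e)).
apply: eq_card => -[x y]; rewrite !inE /=.
apply/idP/imsetP => [/andP[/andP[/eqP-> yT] lt]|[j]].
  by exists y => //; rewrite inE yT.
by rewrite inE => /andP[jT lt] [-> ->]; rewrite eqxx jT.
Qed.

Lemma ksignU1 k T i : k \notin T ->
  ksign (k |: T) i = (if (k < i)%N then -1 else 1) * ksign T i.
Proof.
move=> kT; rewrite /ksign; case: (ltnP k i) => ki.
  rewrite (_ : [set j in k |: T | _] = k |: [set j in T | (j < i)%N]).
    by rewrite cardsU1 inE (negbTE kT) /= exprS.
  by apply/setP => j; rewrite !inE; case: (j =P k) => [->|] //=; rewrite ki.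
rewrite mul1r; congr (_ ^+ _); apply: eq_card => j; rewrite !inE.
by case: (j =P k) => [->|] //=; rewrite (negbTE kT) ltnNge ki.
Qed.

Lemma ksign_sq T i : ksign T i * ksign T i = 1.
Proof. by rewrite /ksign -exprD addnn -mul2n exprM sqrrN !expr1n. Qed.

Lemma disjointsUl S T V :
  [disjoint S :|: T & V] = [disjoint S & V] && [disjoint T & V].
Proof. by rewrite -!setI_eq0 setIUl setU_eq0. Qed.

Lemma disjointsUr S T V :
  [disjoint S & T :|: V] = [disjoint S & T] && [disjoint S & V].
Proof. by rewrite -!setI_eq0 setIUr setU_eq0. Qed.

Lemma sum_if_eq Y (P : pred {set 'I_r}) (F : {set 'I_r} -> A) :
  \sum_(X : {set 'I_r}) (if (Y == X) && P X then F X else 0) =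
  if P Y then F Y else 0.
Proof.
rewrite (bigD1 Y) //= eqxx big1 ?addr0 // => X /negbTE nXY.
by rewrite eq_sym nXY.
Qed.

Lemma wedge_wedgeE u v w U : wedge (wedge u v) w U =
  \sum_(S : {set 'I_r}) \sum_(T : {set 'I_r}) \sum_(V : {set 'I_r})
    (if [disjoint S & T] && [disjoint S :|: T & V] && (S :|: T :|: V == U)
     then wsign A S T * wsign A (S :|: T) V * u S * v T * w V else 0).
Proof.
rewrite wedgeE.
transitivity (\sum_(X : {set 'I_r}) \sum_(V : {set 'I_r})
    \sum_(S : {set 'I_r}) \sum_(T : {set 'I_r})
  (if (S :|: T == X) && ([disjoint S & T] && [disjoint X & V] && (X :|: V == U))
   then wsign A S T * wsign A X V * u S * v T * w V else 0)).
  apply: eq_bigr => X _; apply: eq_bigr => V _; rewrite wedgeE.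
  case: ifP => [/andP[dXV eU]|nXV].
    rewrite mulr_sumr mulr_suml; apply: eq_bigr => S _.
    rewrite mulr_sumr mulr_suml; apply: eq_bigr => T _.
    rewrite dXV eU !andbT andbC.
    by case: ifP => _; [ring | rewrite mulr0 mul0r].
  rewrite big1 // => S _; rewrite big1 // => T _.
  by rewrite -andbA nXV !andbF.
rewrite exchange_big; under eq_bigr do rewrite exchange_big.
under eq_bigr do under eq_bigr do rewrite exchange_big.
under eq_bigr do under eq_bigr do under eq_bigr do rewrite sum_if_eq.
rewrite exchange_big; apply: eq_bigr => S _; exact: exchange_big.
Qed.

Lemma wedge_wedgeEr u v w U : wedge u (wedge v w) U =
  \sum_(S : {set 'I_r}) \sum_(T : {set 'I_r}) \sum_(V : {set 'I_r})
    (if [disjoint T & V] && [disjoint S & T :|: V] && (S :|: (T :|: V) == U)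
     then wsign A S (T :|: V) * wsign A T V * u S * v T * w V else 0).
Proof.
rewrite wedgeE.
transitivity (\sum_(S : {set 'I_r}) \sum_(Y : {set 'I_r})
    \sum_(T : {set 'I_r}) \sum_(V : {set 'I_r})
  (if (T :|: V == Y) && ([disjoint T & V] && [disjoint S & Y] && (S :|: Y == U))
   then wsign A S Y * wsign A T V * u S * v T * w V else 0)).
  apply: eq_bigr => S _; apply: eq_bigr => Y _; rewrite wedgeE.
  case: ifP => [/andP[dSY eU]|nSY].
    rewrite mulr_sumr; apply: eq_bigr => T _.
    rewrite mulr_sumr; apply: eq_bigr => V _.
    rewrite dSY eU !andbT andbC.
    by case: ifP => _; [ring | rewrite mulr0].
  rewrite big1 // => T _; rewrite big1 // => V _.
  by rewrite -andbA nSY !andbF.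
apply: eq_bigr => S _; rewrite exchange_big; apply: eq_bigr => T _.
by rewrite exchange_big; apply: eq_bigr => V _; rewrite sum_if_eq.
Qed.

Lemma wedgeA u v w : wedge (wedge u v) w = wedge u (wedge v w).
Proof.
apply/ffunP => U; rewrite wedge_wedgeE wedge_wedgeEr.
apply: eq_bigr => S _; apply: eq_bigr => T _; apply: eq_bigr => V _.
rewrite disjointsUl disjointsUr setUA.
case dST: [disjoint S & T]; case dSV: [disjoint S & V];
  case dTV: [disjoint T & V] => //=.
by rewrite wsign_cocycle.
Qed.

Lemma wedge1l u : wedge (kone A r) u = u.
Proof.
apply/ffunP => U; rewrite wedgeE (bigD1 set0) //= [X in _ + X]big1 ?addr0.
  rewrite -[RHS](sum_if_eq U predT); apply: eq_bigr => T _.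
  rewrite ffunE eqxx wsign0l set0U -setI_eq0 set0I eqxx.
  by rewrite eq_sym !mulr1 mul1r andbT.
move=> S nS; apply: big1 => T _.
by rewrite ffunE (negbTE nS) mulr0 mul0r if_same.
Qed.

Lemma wedge1r u : wedge u (kone A r) = u.
Proof.
apply/ffunP => U; rewrite wedgeE -[RHS](sum_if_eq U predT).
apply: eq_bigr => S _; rewrite (bigD1 set0) //= big1 ?addr0.
  rewrite ffunE eqxx wsign0r setU0 -setI_eq0 setI0 eqxx.
  by rewrite eq_sym !mulr1 mul1r andbT.
by move=> T nT; rewrite ffunE (negbTE nT) mulr0 if_same.
Qed.

Lemma wedge_basis1E i w V : wedge (kbasis A [set i]) w V =
  if i \in V then ksign (V :\ i) i * w (V :\ i) else 0.
Proof.
rewrite wedgeE (bigD1 [set i]) //= [X in _ + X]big1 ?addr0; last first.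
  move=> S nS; apply: big1 => T _.
  by rewrite ffunE (negbTE nS) mulr0 mul0r if_same.
case: ifP => iV.
  transitivity (\sum_(T : {set 'I_r})
      (if (V :\ i == T) && predT T then wsign A [set i] T * w T else 0)).
    apply: eq_bigr => T _.
    rewrite ffunE eqxx mulr1 andbT disjoints1; congr (if _ then _ else _).
    apply/idP/idP => [/andP[iT /eqP <-]|/eqP <-]; first by rewrite setU1K.
    by rewrite setD11 setD1K ?eqxx.
  by rewrite (sum_if_eq _ predT (fun T => wsign A [set i] T * w T)) wsign1l.
apply: big1 => T _; case: ifP => // /andP[_ /eqP eV].
by move: iV; rewrite -eV !inE eqxx.
Qed.

Lemma setU1D1 (k i : 'I_r) U : k != i -> (k |: U) :\ i = k |: (U :\ i).
Proof.
move=> ki; apply/setP => j; rewrite !inE.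
by case: (j =P k) => [->|] //=; rewrite ki.
Qed.

Lemma khomog0 k : khomog k (0 : K).
Proof. by move=> S _; rewrite ffunE. Qed.

Lemma khomogB k u v : khomog k u -> khomog k v -> khomog k (u - v).
Proof. by move=> hu hv S hS; rewrite !ffunE hu // hv // subr0. Qed.

Lemma khomogZ k x u : khomog k u -> khomog k (kscale x u).
Proof. by move=> hu S hS; rewrite ffunE hu // mulr0. Qed.

Lemma khomog_sum k I (s : seq I) (F : I -> K) :
  (forall i, khomog k (F i)) -> khomog k (\sum_(i <- s) F i).
Proof.
move=> hF S hS; rewrite sum_ffunE big1 // => i _; exact: hF.
Qed.

Lemma khomog_basis S : khomog #|S| (kbasis A S).
Proof.
by move=> T hT; rewrite ffunE; case: eqP => // eTS; rewrite eTS eqxx in hT.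
Qed.

Lemma khomog_wedge p q u v :
  khomog p u -> khomog q v -> khomog (p + q) (wedge u v).
Proof.
move=> hu hv U hU; rewrite wedgeE big1 // => S _; apply: big1 => T _.
case: ifP => // /andP[dST /eqP eU].
have [eS|/eqP nS] := #|S| =P p; last by rewrite hu // mulr0 mul0r.
have [eT|/eqP nT] := #|T| =P q; last by rewrite hv // mulr0.
by rewrite -eU cardsU (disjoint_setI0 dST) cards0 subn0 eS eT eqxx in hU.
Qed.

Lemma khomog_top u : khomog r u -> u = kscale (u setT) (ktop A r).
Proof.
move=> hu; apply/ffunP => U; rewrite !ffunE.
have [->|nU] := eqVneq U setT; first by rewrite mulr1.
rewrite mulr0 hu //; apply: contra nU => /eqP cU.
by rewrite eqEcard subsetT cardsT card_ord cU leqnn.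
Qed.

Section Differential.
Variable f : 'I_r -> A.

Lemma kdiffE u U :
  kdiff f u U = \sum_(i | i \notin U) ksign U i * f i * u (i |: U).
Proof. by rewrite ffunE. Qed.

Lemma kdiffD u v : kdiff f (u + v) = kdiff f u + kdiff f v.
Proof.
apply/ffunP => U; rewrite !ffunE -big_split; apply: eq_bigr => i _.
by rewrite ffunE mulrDr.
Qed.

Lemma kdiffN u : kdiff f (- u) = - kdiff f u.
Proof.
apply/ffunP => U; rewrite !ffunE -sumrN; apply: eq_bigr => i _.
by rewrite ffunE mulrN.
Qed.

Lemma kdiffB u v : kdiff f (u - v) = kdiff f u - kdiff f v.
Proof. by rewrite kdiffD kdiffN. Qed.

Lemma kdiff0 : kdiff f 0 = 0.
Proof.
by apply/ffunP => U; rewrite !ffunE big1 // => i _; rewrite ffunE mulr0.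
Qed.

Lemma kdiffZ x u : kdiff f (kscale x u) = kscale x (kdiff f u).
Proof.
apply/ffunP => U; rewrite !ffunE mulr_sumr; apply: eq_bigr => i _.
by rewrite ffunE; ring.
Qed.

Lemma kdiff_sum I (s : seq I) (F : I -> K) :
  kdiff f (\sum_(i <- s) F i) = \sum_(i <- s) kdiff f (F i).
Proof. exact: (big_morph (fun u => kdiff f u) kdiffD kdiff0). Qed.

Lemma sum_antisym_eq0 (H : 'I_r -> 'I_r -> A) :
  (forall i k, H k i = - H i k) -> (forall i, H i i = 0) ->
  \sum_(i < r) \sum_(k < r) H i k = 0.
Proof.
move=> Hanti Hdiag.
transitivity (\sum_(i < r) \sum_(k < r)
    ((if (i < k)%N then H i k else 0) + (if (k < i)%N then H i k else 0))).
  apply: eq_bigr => i _; apply: eq_bigr => k _.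
  case: (ltngtP i k) => [_|_|/val_inj ->]; by rewrite ?addr0 ?add0r ?Hdiag.
under eq_bigr do rewrite big_split /=.
rewrite big_split /= [X in _ + X]exchange_big -big_split /= big1 // => i _.
rewrite -big_split big1 // => k _ /=.
by case: ifP => _; rewrite ?addr0 // [H k i]Hanti subrr.
Qed.

Lemma kdiffK u : kdiff f (kdiff f u) = 0.
Proof.
apply/ffunP => U; rewrite kdiffE ffunE.
(* Removing first i then k, or first k then i, gives opposite signs. *)
pose H i k := if (i \notin U) && (k \notin U) && (k != i) then
  ksign U i * ksign (i |: U) k * f i * f k * u (k |: (i |: U)) else 0.
transitivity (\sum_(i < r) \sum_(k < r) H i k); last first.
  apply: sum_antisym_eq0 => [i k|i]; last by rewrite /H eqxx andbF.
  rewrite /H eq_sym; case iU: (i \in U) => /=; first by rewrite andbF oppr0.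
  case kU: (k \in U) => /=; first by rewrite oppr0.
  case: eqP => [_|/eqP nik]; first by rewrite oppr0.
  rewrite setUCA (ksignU1 _ (negbT kU)) (ksignU1 _ (negbT iU)).
  case: (ltngtP i k) => [_|_|/val_inj eik] /=; try ring.
  by rewrite eik eqxx in nik.
rewrite big_mkcond; apply: eq_bigr => i _.
case: ifP => iU; last by rewrite big1 // => k _; rewrite /H iU.
rewrite kdiffE mulr_sumr big_mkcond; apply: eq_bigr => k _.
rewrite /H iU /= !inE negb_or andbC.
by case: ifP => _ //; ring.
Qed.

Lemma kdiff_wedge_basis1 i w :
  kdiff f (wedge (kbasis A [set i]) w) =
  kscale (f i) w - wedge (kbasis A [set i]) (kdiff f w).
Proof.
apply/ffunP => U.
rewrite kdiffE [RHS]ffunE [X in _ + X]ffunE kscaleE [in RHS]wedge_basis1E.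
case: ifP => iU; last first.
  rewrite subr0 (bigD1 i) ?iU //= [X in _ + X]big1 ?addr0; last first.
    move=> k /andP[kU ki]; rewrite wedge_basis1E !inE iU eq_sym (negbTE ki).
    by rewrite mulr0.
  by rewrite wedge_basis1E setU11 setU1K ?iU // mulrCA !mulrA ksign_sq mul1r.
have iUi : i \notin U :\ i by rewrite setD11.
rewrite kdiffE [in RHS](bigD1 i) //= setD1K //.
rewrite mulrDr !mulrA ksign_sq mul1r opprD addrA subrr add0r.
rewrite mulr_sumr -sumrN.
rewrite [in RHS](eq_bigl (fun k => k \notin U)); last first.
  move=> k; rewrite !inE negb_and negbK.
  by case: (k =P i) => [->|]; rewrite ?iU ?andbF //= andbT.
apply: eq_bigr => k kU.
have ki : k != i by apply: contraNneq kU => ->.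
have kUi : k \notin U :\ i by rewrite !inE negb_and kU orbT.
rewrite wedge_basis1E !inE iU orbT setU1D1 //.
rewrite -[ksign U k](congr1 (ksign^~ k) (setD1K iU)) /=.
rewrite (ksignU1 _ iUi) (ksignU1 _ kUi).
case: (ltngtP i k) => [_|_|/val_inj eik] /=; try ring.
by rewrite eik eqxx in ki.
Qed.

Lemma kdiff_homog k u : khomog k u -> forall U, #|U|.+1 != k -> kdiff f u U = 0.
Proof.
move=> hu U hU; rewrite kdiffE big1 // => i iU.
by rewrite hu ?mulr0 // cardsU1 iU.
Qed.

End Differential.
End KoszulAlgebra.

Definition ord_cat T m n (h1 : 'I_m -> T) (h2 : 'I_n -> T) (i : 'I_(m + n)) : T :=
  match split i with inl k => h1 k | inr k => h2 k end.

Lemma ord_cat_lshift T m n (h1 : 'I_m -> T) (h2 : 'I_n -> T) k :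
  ord_cat h1 h2 (lshift n k) = h1 k.
Proof. by rewrite /ord_cat (unsplitK (inl k)). Qed.

Lemma ord_cat_rshift T m n (h1 : 'I_m -> T) (h2 : 'I_n -> T) k :
  ord_cat h1 h2 (rshift m k) = h2 k.
Proof. by rewrite /ord_cat (unsplitK (inr k)). Qed.

Section Gamma.
Variables (A : comPzRingType) (r s : nat) (c : 'M[A]_(r, s)).
Local Notation K := {ffun {set 'I_r} -> A}.

Definition kzeta_prod (t : seq 'I_s) : K :=
  \big[@wedge A r / kone A r]_(j <- t) kzeta c j.

Lemma kzeta_homog j : khomog 1 (kzeta c j).
Proof.
apply: khomog_sum => i; apply: khomogZ.
by rewrite -(cards1 i); exact: khomog_basis.
Qed.

Lemma kzeta_prod_homog t : khomog (size t) (kzeta_prod t).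
Proof.
elim: t => [|j t IH].
  by rewrite /kzeta_prod big_nil; move: (@khomog_basis A r set0); rewrite cards0.
by rewrite /kzeta_prod big_cons; exact: khomog_wedge (kzeta_homog j) IH.
Qed.

Lemma kzeta_prod_rcons t j :
  kzeta_prod (rcons t j) = wedge (kzeta_prod t) (kzeta c j).
Proof.
elim: t => [|i t IH].
  by rewrite /kzeta_prod big_cons !big_nil wedge1r wedge1l.
by rewrite /kzeta_prod !big_cons -/(kzeta_prod _) IH wedgeA.
Qed.

Lemma kgamma_homog d g : kgamma c d g -> khomog d g.
Proof.
case=> m [coef [idx ->]]; apply: khomog_sum => l; apply: khomogZ.
by move: (kzeta_prod_homog (t := idx l)); rewrite size_tuple.
Qed.

Lemma kgamma0 d : kgamma c d 0.
Proof. by exists 0, (fun _ => 0), (ffun0 (card_ord 0)); rewrite big_ord0. Qed.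

Lemma kgammaD d g1 g2 : kgamma c d g1 -> kgamma c d g2 -> kgamma c d (g1 + g2).
Proof.
case=> m1 [coef1 [idx1 ->]] [m2 [coef2 [idx2 ->]]].
exists (m1 + m2), (ord_cat coef1 coef2), (ord_cat idx1 idx2).
rewrite big_split_ord; congr (_ + _); apply: eq_bigr => l _.
  by rewrite !ord_cat_lshift.
by rewrite !ord_cat_rshift.
Qed.

Lemma kgammaZ d x g : kgamma c d g -> kgamma c d (kscale x g).
Proof.
case=> m [coef [idx ->]]; exists m, (fun l => x * coef l), idx.
by rewrite kscale_sumr; apply: eq_bigr => l _; rewrite kscaleA.
Qed.

Lemma kgamma_sum d I (q : seq I) (F : I -> K) :
  (forall i, kgamma c d (F i)) -> kgamma c d (\sum_(i <- q) F i).
Proof.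
move=> hF; elim: q => [|i q IH]; first by rewrite big_nil; exact: kgamma0.
by rewrite big_cons; apply: kgammaD.
Qed.

Lemma kgamma_prod d (t : d.-tuple 'I_s) : kgamma c d (kzeta_prod t).
Proof.
exists 1, (fun _ => 1), (fun _ => t); rewrite big_ord1.
by apply/ffunP => S; rewrite ffunE mul1r.
Qed.

Lemma kgamma_wedge_kzeta d g j :
  kgamma c d g -> kgamma c d.+1 (wedge g (kzeta c j)).
Proof.
case=> m [coef [idx ->]]; rewrite wedge_suml; apply: kgamma_sum => l.
rewrite wedgeZl -kzeta_prod_rcons; apply: kgammaZ.
exact: (kgamma_prod (rcons_tuple (idx l) j)).
Qed.

Lemma kgamma_wedge_lin d g (x : 'I_s -> A) : kgamma c d g ->
  kgamma c d.+1 (wedge g (\sum_(j < s) kscale (x j) (kzeta c j))).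
Proof.
move=> hg; rewrite wedge_sumr; apply: kgamma_sum => j.
by rewrite wedgeZr; apply/kgammaZ/kgamma_wedge_kzeta.
Qed.

Definition kitt_span (f : 'I_r -> A) (v : K) : Prop :=
  exists (n : nat) (d : 'I_n -> nat) (g z : 'I_n -> K),
    [/\ forall l, kgamma c (d l) (g l),
        forall l, kcycle f (r - d l) (z l) &
        v = \sum_(l < n) wedge (g l) (z l)].

Lemma kittE f x : kitt f c x <-> kitt_span f (kscale x (ktop A r)).
Proof. by []. Qed.

Variable f : 'I_r -> A.

Lemma kitt_span0 : kitt_span f 0.
Proof.
exists 0, (fun _ => 0%N), (fun _ => 0), (fun _ => 0).
by split=> [[]|[]|]; rewrite // big_ord0.
Qed.

Lemma kitt_spanD v1 v2 :
  kitt_span f v1 -> kitt_span f v2 -> kitt_span f (v1 + v2).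
Proof.
case=> n1 [d1 [g1 [z1 [hg1 hz1 ->]]]] [n2 [d2 [g2 [z2 [hg2 hz2 ->]]]]].
exists (n1 + n2), (ord_cat d1 d2), (ord_cat g1 g2), (ord_cat z1 z2); split.
- move=> l; rewrite /ord_cat; case: split => k; [exact: hg1 | exact: hg2].
- move=> l; rewrite /ord_cat; case: split => k; [exact: hz1 | exact: hz2].
rewrite big_split_ord; congr (_ + _); apply: eq_bigr => l _.
  by rewrite !ord_cat_lshift.
by rewrite !ord_cat_rshift.
Qed.

Lemma kitt_span_wedge d g z :
  kgamma c d g -> kcycle f (r - d) z -> kitt_span f (wedge g z).
Proof.
move=> hg hz; exists 1, (fun _ => d), (fun _ => g), (fun _ => z).
by split; rewrite // big_ord1.
Qed.

Lemma kitt_span_sum I (q : seq I) (F : I -> K) :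
  (forall i, kitt_span f (F i)) -> kitt_span f (\sum_(i <- q) F i).
Proof.
move=> hF; elim: q => [|i q IH]; first by rewrite big_nil; exact: kitt_span0.
by rewrite big_cons; apply: kitt_spanD.
Qed.

Lemma kitt_span_homog v : kitt_span f v -> khomog r v.
Proof.
case=> n [d [g [z [hg hz ->]]]]; apply: khomog_sum => l.
have [le_dr|lt_rd] := leqP (d l) r.
  have := khomog_wedge (kgamma_homog (hg l)) (proj1 (hz l)).
  by rewrite subnKC.
suff -> : g l = 0 by rewrite wedge0l; exact: khomog0.
apply/ffunP => S; rewrite ffunE (kgamma_homog (hg l)) //.
rewrite neq_ltn (leq_ltn_trans _ lt_rd) //.
by rewrite -[X in (_ <= X)%N](card_ord r) max_card.
Qed.

End Gamma.

Section BaseChange.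
Variables (A B : comPzRingType) (phi : {rmorphism A -> B}) (r s : nat).
Local Notation KA := {ffun {set 'I_r} -> A}.

Definition kmap (u : KA) : {ffun {set 'I_r} -> B} := [ffun S => phi (u S)].

Lemma kmapD u v : kmap (u + v) = kmap u + kmap v.
Proof. by apply/ffunP => S; rewrite !ffunE rmorphD. Qed.

Lemma kmap0 : kmap 0 = 0.
Proof. by apply/ffunP => S; rewrite !ffunE rmorph0. Qed.

Lemma kmap_sum I (q : seq I) (F : I -> KA) :
  kmap (\sum_(i <- q) F i) = \sum_(i <- q) kmap (F i).
Proof. exact: (big_morph kmap kmapD kmap0). Qed.

Lemma kmapZ x u : kmap (kscale x u) = kscale (phi x) (kmap u).
Proof. by apply/ffunP => S; rewrite !ffunE rmorphM. Qed.

Lemma kmap_basis S : kmap (kbasis A S) = kbasis B S.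
Proof. by apply/ffunP => T; rewrite !ffunE rmorph_nat. Qed.

Lemma kmap_wedge u v : kmap (wedge u v) = wedge (kmap u) (kmap v).
Proof.
apply/ffunP => U; rewrite !ffunE rmorph_sum; apply: eq_bigr => S _.
rewrite rmorph_sum; apply: eq_bigr => T _.
by rewrite !rmorphM !ffunE rmorphXn rmorphN1.
Qed.

Lemma kmap_kdiff f u : kmap (kdiff f u) = kdiff (phi \o f) (kmap u).
Proof.
apply/ffunP => U; rewrite !ffunE rmorph_sum; apply: eq_bigr => i _.
by rewrite !rmorphM !ffunE rmorphXn rmorphN1.
Qed.

Lemma kmap_kzeta (c : 'M[A]_(r, s)) j : kmap (kzeta c j) = kzeta (map_mx phi c) j.
Proof.
rewrite kmap_sum; apply: eq_bigr => i _.
by rewrite kmapZ kmap_basis mxE.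
Qed.

Lemma kmap_kzeta_prod (c : 'M[A]_(r, s)) t :
  kmap (kzeta_prod c t) = kzeta_prod (map_mx phi c) t.
Proof.
elim: t => [|j t IH]; first by rewrite /kzeta_prod !big_nil kmap_basis.
by rewrite /kzeta_prod !big_cons kmap_wedge -!/(kzeta_prod _ _) IH kmap_kzeta.
Qed.

Lemma kmap_kgamma (c : 'M[A]_(r, s)) d g :
  kgamma c d g -> kgamma (map_mx phi c) d (kmap g).
Proof.
case=> m [coef [idx ->]]; exists m, (phi \o coef), idx.
by rewrite kmap_sum; apply: eq_bigr => l _; rewrite kmapZ kmap_kzeta_prod.
Qed.

Lemma kmap_kcycle f k z : kcycle f k z -> kcycle (phi \o f) k (kmap z).
Proof.
case=> hz dz; split; first by move=> S hS; rewrite ffunE hz // rmorph0.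
by rewrite -kmap_kdiff dz kmap0.
Qed.

Lemma kmap_kitt_span (c : 'M[A]_(r, s)) f v :
  kitt_span c f v -> kitt_span (map_mx phi c) (phi \o f) (kmap v).
Proof.
case=> n [d [g [z [hg hz ->]]]].
exists n, d, (kmap \o g), (kmap \o z); split=> [l|l|].
- exact: kmap_kgamma.
- exact: kmap_kcycle.
by rewrite kmap_sum; apply: eq_bigr => l _; rewrite kmap_wedge.
Qed.

Variables (psi : B -> A) (phiK : cancel psi phi).

Lemma kmap_lift_homog k (zb : {ffun {set 'I_r} -> B}) :
  khomog k zb -> exists2 z, khomog k z & kmap z = zb.
Proof.
move=> hzb; exists [ffun S : {set 'I_r} => if #|S| == k then psi (zb S) else 0].
  by move=> S hS; rewrite ffunE (negbTE hS).
apply/ffunP => S; rewrite !ffunE; case: eqP => [_|/eqP hS]; first exact: phiK.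
by rewrite rmorph0 hzb.
Qed.

Lemma kmap_lift_kgamma (c : 'M[A]_(r, s)) d gb :
  kgamma (map_mx phi c) d gb -> exists2 g, kgamma c d g & kmap g = gb.
Proof.
case=> m [coef [idx ->]].
exists (\sum_(l < m) kscale (psi (coef l)) (kzeta_prod c (idx l))).
  by exists m, (psi \o coef), idx.
by rewrite kmap_sum; apply: eq_bigr => l _; rewrite kmapZ kmap_kzeta_prod phiK.
Qed.

End BaseChange.

Section PrincipalQuotientMap.
Variables (R : comPzRingType) (f0 : R).

Lemma pqpi_is_zmod_morphism : zmod_morphism (pqpi f0).
Proof. by move=> x y; rewrite /pqpi !piE. Qed.

Lemma pqpi_is_monoid_morphism : monoid_morphism (pqpi f0).
Proof. by split=> [|x y]; rewrite /pqpi !piE. Qed.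

HB.instance Definition _ :=
  GRing.isZmodMorphism.Build R (pquot f0) (pqpi f0) pqpi_is_zmod_morphism.
HB.instance Definition _ :=
  GRing.isMonoidMorphism.Build R (pquot f0) (pqpi f0) pqpi_is_monoid_morphism.

Lemma pqpiK : cancel repr (pqpi f0).
Proof. exact: reprK. Qed.

Lemma pqpi_eq0 x : pqpi f0 x = 0 -> exists t, x = t * f0.
Proof.
move=> /eqP; rewrite -(rmorph0 (pqpi f0)) /pqpi piE Quotient.equivE subr0.
by move/asboolP.
Qed.

Lemma kmap_pqpi_eq0 r (v : {ffun {set 'I_r} -> R}) :
  kmap (pqpi f0) v = 0 -> exists w, v = kscale f0 w.
Proof.
move=> v0; have vS_eq0 S : exists t, v S = t * f0.
  by apply: pqpi_eq0; move/ffunP/(_ S): v0; rewrite !ffunE.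
have [w vE] := fin_all_exists vS_eq0.
by exists (finfun w); apply/ffunP => S; rewrite vE !ffunE mulrC.
Qed.

End PrincipalQuotientMap.

Section Lifting.
Variables (R : comPzRingType) (r s : nat) (f : 'I_r -> R) (a : 'I_s -> R).
Variables (c : 'M[R]_(r, s)) (f0 : R) (u : 'I_s -> R).
Hypothesis a_def : forall j, a j = \sum_(i < r) c i j * f i.
Hypothesis f0_def : f0 = \sum_(j < s) u j * a j.
Hypothesis f0_reg : forall x : R, x * f0 = 0 -> x = 0.
Local Notation K := {ffun {set 'I_r} -> R}.

Lemma kdiff_wedge_kzeta j w :
  kdiff f (wedge (kzeta c j) w) = kscale (a j) w - wedge (kzeta c j) (kdiff f w).
Proof.
rewrite /kzeta !wedge_suml kdiff_sum a_def kscale_suml -sumrB.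
apply: eq_bigr => i _.
by rewrite !wedgeZl kdiffZ kdiff_wedge_basis1 kscaleBr kscaleA.
Qed.

Definition zeta_f0 : K := \sum_(j < s) kscale (u j) (kzeta c j).

Lemma zeta_f0_homog : khomog 1 zeta_f0.
Proof. by apply: khomog_sum => j; apply/khomogZ/kzeta_homog. Qed.

Lemma kdiff_wedge_zeta_f0 (w : K) :
  kdiff f w = 0 -> kdiff f (wedge zeta_f0 w) = kscale f0 w.
Proof.
move=> dw; rewrite /zeta_f0 wedge_suml kdiff_sum f0_def kscale_suml.
apply: eq_bigr => j _.
by rewrite wedgeZl kdiffZ kdiff_wedge_kzeta dw wedge0r subr0 kscaleA.
Qed.

Lemma kscale_f0_eq0 (w : K) : kscale f0 w = 0 -> w = 0.
Proof.
move=> w0; apply/ffunP => S; move/ffunP/(_ S): w0.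
by rewrite !ffunE mulrC => /f0_reg.
Qed.

Lemma kcycle_lift k z : khomog k z -> kmap (pqpi f0) (kdiff f z) = 0 ->
  exists z1 w, [/\ kcycle f k z1, kcycle f k.-1 w & z = z1 + wedge zeta_f0 w].
Proof.
case: k => [|k] hz.
  move=> _; exists z, 0; rewrite wedge0r addr0; split=> //.
    by split=> //; apply/ffunP => U; rewrite (kdiff_homog f hz) ?ffunE.
  by split; [exact: khomog0 | exact: kdiff0].
move=> /kmap_pqpi_eq0 [w dz].
have hw : khomog k w.
  by move=> S hS; apply: f0_reg; rewrite mulrC -kscaleE -dz (kdiff_homog f hz).
have dw : kdiff f w = 0 by apply: kscale_f0_eq0; rewrite -kdiffZ -dz kdiffK.
exists (z - wedge zeta_f0 w), w; split; [split | by split | by rewrite subrK].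
  exact: khomogB hz (khomog_wedge zeta_f0_homog hw).
by rewrite kdiffB dz kdiff_wedge_zeta_f0 // subrr.
Qed.

Lemma kitt_span_lift d gb zb :
  kgamma (map_mx (pqpi f0) c) d gb -> kcycle (pqpi f0 \o f) (r - d) zb ->
  exists2 v, kitt_span c f v & kmap (pqpi f0) v = wedge gb zb.
Proof.
move=> hgb [hzb dzb].
have [g hg <-] := kmap_lift_kgamma (@pqpiK R f0) hgb.
have [z hz zE] := kmap_lift_homog (@pqpiK R f0) hzb.
have dz : kmap (pqpi f0) (kdiff f z) = 0 by rewrite kmap_kdiff zE.
have [z1 [w [hz1 hw zE1]]] := kcycle_lift hz dz.
exists (wedge g z1 + wedge (wedge g zeta_f0) w).
  apply: kitt_spanD; first exact: kitt_span_wedge hg hz1.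
  by apply: kitt_span_wedge (kgamma_wedge_lin u hg) _; rewrite subnS.
by rewrite -zE zE1 wedgeA -wedgeDr kmap_wedge.
Qed.

End Lifting.

Theorem theorem4p26 (R : comPzRingType) (r s : nat)
    (f : 'I_r -> R) (a : 'I_s -> R) (c : 'M[R]_(r, s)) (f0 : R) :
  (forall j : 'I_s, a j = \sum_(i < r) c i j * f i) ->
  (exists u : 'I_s -> R, f0 = \sum_(j < s) u j * a j) ->
  (forall x : R, x * f0 = 0 -> x = 0) ->
  forall y : pquot f0,
    (exists x : R, kitt f c x /\ pqpi f0 x = y) <->
    kitt (fun i => pqpi f0 (f i)) (map_mx (pqpi f0) c) y.
Proof.
move=> a_def [u f0_def] f0_reg y; split.
  case=> x [/kittE hx <-]; apply/kittE.
  by have := kmap_kitt_span (pqpi f0) hx; rewrite kmapZ kmap_basis.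
move/kittE=> [n [d [gb [zb [hgb hzb y_def]]]]].
have [v hv mv] := fin_all_exists2 (fun l =>
  kitt_span_lift a_def f0_def f0_reg (hgb l) (hzb l)).
pose W := \sum_l v l.
have hW : kitt_span c f W by apply: kitt_span_sum.
exists (W setT); split.
  by apply/kittE; rewrite -khomog_top //; exact: kitt_span_homog hW.
have : kmap (pqpi f0) W = kscale y (ktop _ r).
  by rewrite kmap_sum y_def; apply: eq_bigr.
by move/ffunP/(_ setT); rewrite !ffunE eqxx mulr1.
Qed.
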